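(* Let $w$ be a string of length $n$ over an arbitrary alphabet (letters compared only by equality) and let $i$ be a position of $w$ whose local period is internal, i.e. $i-\mu(i)\ge 1$ and $i+\mu(i)-1\le n$. Then $\mu(i)$ can be computed in $O(\mu(i))$ time and space.
   Context: For a position $i\in\{1,\dots,n\}$ of $w$, the local period $\mu(i)$ is the least positive integer $\mu$ such that $w[j]=w[j+\mu]$ for all $j$ with $\max\{1,i-\mu\}\le j$ and $j+\mu\le\min\{n,i+\mu-1\}$. *)

From mathcomp Require Import all_boot.
Set Implicit Arguments. Unset Strict Implicit. Unset Printing Implicit Defensive.

(** * Strings and local periods
    A string of length [n] over an alphabet [A] (an eqType: letters are only
    compared for equality) is given as [w : nat -> A]; its letters are
    [w 1, ..., w n] (1-based positions, values outside [1..n] are irrelevant). *)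

Definition lp_cond (A : eqType) (n : nat) (w : nat -> A) (i m : nat) : Prop :=
  forall j, maxn 1 (i - m) <= j -> j + m <= minn n (i + m - 1) -> w j = w (j + m).

Definition is_local_period (A : eqType) (n : nat) (w : nat -> A) (i mu : nat) : Prop :=
  [/\ 0 < mu, lp_cond n w i mu & forall m, 0 < m -> m < mu -> ~ lp_cond n w i m].

(** * Cost model: a simple RAM with a letter-equality oracle
    Registers r_0, r_1, ... and memory cells M[0], M[1], ... hold naturals
    (unit cost; only addition, truncated subtraction and comparison are
    available, no multiplication/division).  The input string is read-only and
    accessible only through equality queries between positions. *)
Inductive instr :=
| IConst of nat & nat
| IAdd   of nat & nat & nat
| ISub   of nat & nat & nat
| ILoad  of nat & nat
| IStore of nat & nat
| IEq    of nat & nat & nat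
| IJlt   of nat & nat & nat
| IJmp   of nat
| IHalt.

Record config := Config {
  pc : nat;
  reg : nat -> nat;
  mem : nat -> nat;
  space : nat   (* 1 + the largest memory address accessed so far (0 if none) *)
}.

Definition upd (f : nat -> nat) (a v : nat) : nat -> nat :=
  fun x => if x == a then v else f x.

Definition letter_oracle (A : eqType) (n : nat) (w : nat -> A) (a b : nat) : bool :=
  [&& 1 <= a <= n, 1 <= b <= n & w a == w b].

Definition step (P : seq instr) (q : nat -> nat -> bool) (c : config) : option config :=
  let r := reg c in
  let next := (pc c).+1 in
  match nth IHalt P (pc c) with
  | IConst d k => Some (Config next (upd r d k) (mem c) (space c))
  | IAdd d a b => Some (Config next (upd r d (r a + r b)) (mem c) (space c))
  | ISub d a b => Some (Config next (upd r d (r a - r b)) (mem c) (space c))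
  | ILoad d a => Some (Config next (upd r d (mem c (r a))) (mem c)
                              (maxn (space c) (r a).+1))
  | IStore a s => Some (Config next r (upd (mem c) (r a) (r s))
                               (maxn (space c) (r a).+1))
  | IEq d a b => Some (Config next (upd r d (nat_of_bool (q (r a) (r b)))) (mem c) (space c))
  | IJlt a b t => Some (Config (if r a < r b then t else next) r (mem c) (space c))
  | IJmp t => Some (Config t r (mem c) (space c))
  | IHalt => None
  end.

Definition halted (P : seq instr) (q : nat -> nat -> bool) (c : config) : bool :=
  if step P q c is None then true else false.

Fixpoint run (P : seq instr) (q : nat -> nat -> bool) (t : nat) (c : config) : config :=
  if t is t'.+1 then
    if step P q c is Some c' then run P q t' c' else c
  else c.

Definition init (n i : nat) : config :=
  Config 0 (upd (upd (fun _ => 0) 0 n) 1 i) (fun _ => 0) 0.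

From Pilot Require Import Defs.
From mathcomp Require Import all_boot zify.
Set Implicit Arguments. Unset Strict Implicit. Unset Printing Implicit Defensive.

(* For k = 1, 2, 4, ... consider the window s_k = w[i..i+k) w[i-k..i) of
   length 2k.  A positive b <= k is a border of s_k exactly when
   w[i-b..i) = w[i..i+b), which for b <= mu(i) is the local-period condition
   at b.  Hence the shortest positive border of s_k is mu(i) once k >= mu(i),
   and is absent or longer than k while k < mu(i).  The program computes the
   KMP failure table of s_k in O(k) steps and cells, follows the failure links
   from 2k down to the shortest positive border, and stops at the first round
   where that border is at most k; the rounds cost O(mu(i)) in total. *)

Section Borders.
Variable eqv : nat -> nat -> bool.
Hypothesis eqv_sym : forall x y, eqv x y -> eqv y x.
Hypothesis eqv_trans : forall x y z, eqv x y -> eqv y z -> eqv x z.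

Definition border (m b : nat) : Prop := forall t, t < b -> eqv t (m - b + t).

Definition longest_border (m v : nat) : Prop :=
  [/\ v < m, border m v & forall b, v < b < m -> ~ border m b].

Definition fallback_inv (j c : nat) : Prop :=
  [/\ c < j, border j c & forall b, c < b < j -> border j b -> eqv b j = false].

Lemma border_trans m b c : c <= b <= m -> border m b -> border b c -> border m c.
Proof.
move=> /andP[cb bm] Hb Hc t tc.
have -> : m - c + t = m - b + (b - c + t) by lia.
by apply: eqv_trans (Hc t tc) (Hb _ _); lia.
Qed.

Lemma border_border m b c : c < b <= m -> border m b -> border m c -> border b c.
Proof.
move=> /andP[cb bm] Hb Hc t tc.
have Hbt : eqv (b - c + t) (m - b + (b - c + t)) by apply: Hb; lia.
rewrite (_ : m - b + _ = m - c + t) in Hbt; last by lia.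
exact: eqv_trans (Hc t tc) (eqv_sym Hbt).
Qed.

Lemma borderS m b : b < m -> border m b -> eqv b m -> border m.+1 b.+1.
Proof.
move=> bm Hb Ebm t; rewrite ltnS leq_eqVlt => /orP[/eqP->|tb].
  by rewrite (_ : _ + b = m) //; lia.
by rewrite (_ : _ + t = m - b + t); [exact: Hb | lia].
Qed.

Lemma borderSI m b : b <= m -> border m.+1 b.+1 -> border m b /\ eqv b m.
Proof.
move=> bm H; split; last by have := H b (leqnn _); rewrite (_ : _ + b = m) //; lia.
move=> t tb; have := H t (leqW tb).
by rewrite (_ : _ + t = m - b + t) //; lia.
Qed.

Lemma longest_border1 : longest_border 1 0.
Proof. by split=> // b; lia. Qed.

Lemma fallback_inv_init j c : longest_border j c -> fallback_inv j c.
Proof. by case=> cj Hc Hmax; split=> // b /Hmax. Qed.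

(* A border of [j] strictly between [c'] and [c] would be a border of [c]
   longer than [c']. *)
Lemma fallback_inv_next j c c' :
  0 < c -> fallback_inv j c -> eqv c j = false -> longest_border c c' -> fallback_inv j c'.
Proof.
move=> c0 [cj Hc Hno] Ecj [c'c Hc' Hmax]; split.
- lia.
- by apply: border_trans Hc Hc'; lia.
- move=> b /andP[c'b bj] Hb.
  case: (ltngtP b c) => [bc|cb|-> //].
  + by case: (Hmax b); [lia | apply: border_border Hc Hb; lia].
  + by apply: Hno; first lia.
Qed.

Lemma longest_borderS j c : fallback_inv j c -> eqv c j -> longest_border j.+1 c.+1.
Proof.
move=> [cj Hc Hno] Ecj; split; [lia | exact: borderS |].
case=> [|b] //; rewrite !ltnS => /andP[cb bj] /(borderSI (ltnW bj)) [Hb].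
by rewrite Hno // cb.
Qed.

Lemma longest_borderS0 j : fallback_inv j 0 -> eqv 0 j = false -> longest_border j.+1 0.
Proof.
move=> [_ _ Hno] E0j; split=> // -[|b] //; rewrite !ltnS => /andP[_ bj].
move=> /(borderSI (ltnW bj)) [Hb].
by case: b bj Hb => [|b] bj Hb; [rewrite E0j | rewrite Hno].
Qed.

End Borders.

Section Reaches.
Variables (P : seq instr) (q : nat -> nat -> bool).

Definition reaches (c : config) (Q : nat -> config -> Prop) : Prop :=
  exists t, Q t (run P q t c).

Lemma run_add a b c : run P q (a + b) c = run P q b (run P q a c).
Proof.
elim: a c => [|a IH] c //=.
by case E: (step P q c) => [c'|] //; case: (b) => //=; rewrite E.
Qed.

Lemma reaches_now c (Q : nat -> config -> Prop) : Q 0 c -> reaches c Q.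
Proof. by exists 0. Qed.

Lemma reaches_step c Q :
  (if step P q c is Some c' then reaches c' (fun t => Q t.+1) else False) -> reaches c Q.
Proof. by case E: (step P q c) => [c'|] // [t Ht]; exists t.+1 => /=; rewrite E. Qed.

Lemma reaches_seq c Q1 Q2 : reaches c Q1 ->
  (forall t1 c1, Q1 t1 c1 -> reaches c1 (fun t2 => Q2 (t1 + t2))) -> reaches c Q2.
Proof.
move=> [t1 H1] /(_ _ _ H1) [t2 H2]; exists (t1 + t2); by rewrite run_add.
Qed.

Lemma reaches_weaken c (Q1 Q2 : nat -> config -> Prop) :
  (forall t c, Q1 t c -> Q2 t c) -> reaches c Q1 -> reaches c Q2.
Proof. by move=> H [t Ht]; exists t; apply: H. Qed.

End Reaches.

Lemma updE f a v x : upd f a v x = if x == a then v else f x.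
Proof. by []. Qed.

Lemma letter_oracle_sym (A : eqType) n (w : nat -> A) x y :
  letter_oracle n w x y -> letter_oracle n w y x.
Proof. by case/and3P=> hx hy /eqP Exy; rewrite /letter_oracle hx hy Exy eqxx. Qed.

Lemma letter_oracle_trans (A : eqType) n (w : nat -> A) x y z :
  letter_oracle n w x y -> letter_oracle n w y z -> letter_oracle n w x z.
Proof.
case/and3P=> hx _ /eqP Exy /and3P[_ hz /eqP Eyz].
by rewrite /letter_oracle hx hz Exy Eyz eqxx.
Qed.

(* Letter [x] of the window [s_k] is [w (window_pos k x)].  Registers during
   round [k]: r1 = i, r2 = k, r3 = 2k, r4 = j (prefix length), r5 = c (its
   current border), r6 and r7 = the compared positions, r8 = their equality,
   r9 = 1, r10 = 0, r11 = the current failure link; M[1..2k] is the failure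
   table.  Lines 6-23 build the table, 24-29 follow the links, 30-36 stop or double k. *)
Definition kmp_prog : seq instr := [::
 (*0*) IConst 9 1;
 (*1*) IConst 2 1;
 (*2*) IAdd 3 2 2;
 (*3*) IStore 9 10;
 (*4*) IConst 5 0;
 (*5*) IConst 4 1;
 (*6*) IJlt 4 3 8;
 (*7*) IJmp 24;
 (*8*) IAdd 6 1 5;
 (*9*) IJlt 5 2 11;
 (*10*) ISub 6 6 3;
 (*11*) IAdd 7 1 4;
 (*12*) IJlt 4 2 14;
 (*13*) ISub 7 7 3;
 (*14*) IEq 8 6 7;
 (*15*) IJlt 10 8 20;
 (*16*) IJlt 10 5 18;
 (*17*) IJmp 21;
 (*18*) ILoad 5 5;
 (*19*) IJmp 8;
 (*20*) IAdd 5 5 9;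
 (*21*) IAdd 4 4 9;
 (*22*) IStore 4 5;
 (*23*) IJmp 6;
 (*24*) ILoad 11 3;
 (*25*) ILoad 12 11;
 (*26*) IJlt 10 12 28;
 (*27*) IJmp 30;
 (*28*) IAdd 11 12 10;
 (*29*) IJmp 25;
 (*30*) IJlt 10 11 32;
 (*31*) IJmp 35;
 (*32*) IJlt 2 11 35;
 (*33*) IAdd 0 11 10;
 (*34*) IHalt;
 (*35*) IAdd 2 2 2;
 (*36*) IJmp 2 ].

Ltac exec_step := apply: reaches_step; rewrite /step /= ?updE /=.

Ltac rewrite_regs :=
  repeat match goal with H : ?r ?x = _ |- context [?r ?x] => rewrite H end.

Ltac exec := exec_step; rewrite_regs.

Section Window.
Variables (A : eqType) (n : nat) (w : nat -> A) (i : nat).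

Local Notation q := (letter_oracle n w).

Definition window_pos k x := if x < k then i + x else i + x - (k + k).

Definition window_eq k x y := q (window_pos k x) (window_pos k y).

Lemma window_eq_sym k x y : window_eq k x y -> window_eq k y x.
Proof. exact: letter_oracle_sym. Qed.

Lemma window_eq_trans k x y z : window_eq k x y -> window_eq k y z -> window_eq k x z.
Proof. exact: letter_oracle_trans. Qed.

Record frame k (r : nat -> nat) : Prop := Frame
  { frame1 : r 1 = i; frame2 : r 2 = k; frame3 : r 3 = k + k;
    frame9 : r 9 = 1; frame10 : r 10 = 0 }.

Lemma frame_upd k r x v : x \notin [:: 1; 2; 3; 9; 10] -> frame k r -> frame k (upd r x v).
Proof.
move=> hx [h1 h2 h3 h9 h10]; split; rewrite updE;
  by case: eqP => // E; move: hx; rewrite -E.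
Qed.

Definition failure_table k j (m : nat -> nat) : Prop :=
  m 0 = 0 /\ forall x, 0 < x <= j -> longest_border (window_eq k) x (m x).

Lemma failure_table_upd k j m v :
  failure_table k j m -> longest_border (window_eq k) j.+1 v ->
  failure_table k j.+1 (upd m j.+1 v).
Proof.
move=> [m0 Hm] Hv; split=> [|x /andP[x0]]; rewrite updE //.
by case: eqP => [-> //| /eqP ne xj]; apply: Hm; rewrite x0 -ltnS ltn_neqAle ne.
Qed.

Lemma compare_spec k j c r m s : frame k r -> r 4 = j -> r 5 = c ->
  reaches kmp_prog q (Config 8 r m s) (fun t cf =>
    [/\ t <= 7, pc cf = 15, Defs.mem cf = m, space cf = s &
        [/\ frame k (reg cf), reg cf 4 = j, reg cf 5 = c & reg cf 8 = window_eq k c j]]).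
Proof.
move=> fr e4 e5; have [e1 e2 e3 e9 e10] := fr.
do 2 exec; case: ifP => h1; [do 2 exec | do 3 exec]; case: ifP => h2;
  [exec | do 2 exec | exec | do 2 exec];
  apply: reaches_now; (split; [done | done | done | done | split]);
  rewrite /= ?updE /= /window_eq /window_pos ?h1 ?h2 //;
  by do ? apply: frame_upd.
Qed.

(* Amortization: each fallback decreases [c] and costs 11 steps, each match
   increases it by 1, hence the potential [t + 11 c']. *)
Lemma fallback_loop_spec k j c r m s : 0 < j < k + k ->
  frame k r -> r 4 = j -> r 5 = c -> fallback_inv (window_eq k) j c ->
  failure_table k j m -> s <= k + k + 1 ->
  reaches kmp_prog q (Config 8 r m s) (fun t cf => exists c',
    [/\ t + 11 * c' <= 24 + 11 * c, pc cf = 6, frame k (reg cf), reg cf 4 = j.+1 &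
        [/\ reg cf 5 = c', longest_border (window_eq k) j.+1 c',
            failure_table k j.+1 (Defs.mem cf) & space cf <= k + k + 1]]).
Proof.
move=> /andP[j0 jk]; elim/ltn_ind: c r m s => c IH r m s fr e4 e5 inv tab hs.
apply: reaches_seq; first exact: (compare_spec m s fr e4 e5).
move=> t1 [pc' r' m' s'] /= [ht1 -> -> -> [fr' e4' e5' e8]].
have [e1 e2 e3 e9 e10] := fr'.
exec; rewrite lt0b; case: ifP => Ecj.
  have Fj := longest_borderS inv Ecj.
  do 4 exec; apply: reaches_now; exists c.+1; rewrite /= ?updE /= !addn1.
  split=> //; first lia.
  by split=> //; [exact: failure_table_upd | lia].
exec; case: ifP => [c0|/negbT].
  have [m0 Hm] := tab.
  have cj : c < j by case: inv.
  have Fc : longest_border (window_eq k) c (m c) by apply: Hm; lia.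
  have [lt_mc_c _ _] := Fc.
  have inv' := fallback_inv_next (@window_eq_sym k) (@window_eq_trans k) c0 inv Ecj Fc.
  do 2 exec; apply: reaches_weaken (IH _ lt_mc_c _ _ _ _ _ _ inv' tab _);
    rewrite /= ?updE //; last by lia.
  by move=> t2 cf [c' [ht2 ? ? ? ?]]; exists c'; split=> //; lia.
rewrite -eqn0Ngt => /eqP c0; rewrite c0 in inv Ecj e5' *.
have Fj := longest_borderS0 inv Ecj.
do 4 exec; apply: reaches_now; exists 0; rewrite /= ?updE /= !addn1.
split=> //; first lia.
by split=> //; [exact: failure_table_upd | lia].
Qed.

Lemma failure_table_spec k d : forall j c r m s, j + d = k + k -> 0 < j ->
  frame k r -> r 4 = j -> r 5 = c -> longest_border (window_eq k) j c ->
  failure_table k j m -> s <= k + k + 1 ->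
  reaches kmp_prog q (Config 6 r m s) (fun t cf =>
    [/\ t <= 26 * d + 11 * c + 2, pc cf = 24, frame k (reg cf),
        failure_table k (k + k) (Defs.mem cf) & space cf <= k + k + 1]).
Proof.
elim: d => [|d IH] j c r m s jd j0 fr e4 e5 Fj tab hs; have [e1 e2 e3 e9 e10] := fr.
  rewrite addn0 in jd; exec; rewrite jd ltnn; exec_step.
  by apply: reaches_now; split=> //; [lia | rewrite -jd].
exec; rewrite (_ : j < k + k) ?ltnn; last by lia.
have jk : 0 < j < k + k by lia.
apply: reaches_seq; first exact: (fallback_loop_spec jk fr e4 e5 (fallback_inv_init Fj) tab hs).
move=> t1 [pc' r' m' s'] [c' [ht1 /= -> fr' e4' [e5' Fj' tab' hs']]].
apply: reaches_weaken (IH j.+1 c' r' m' s' _ _ fr' e4' e5' Fj' tab' hs'); try lia.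
by move=> t2 cf [ht2 ? ? ? ?]; split=> //; lia.
Qed.

(* [b = 0] encodes that [s_k] has no positive proper border. *)
Definition shortest_border k b : Prop :=
  [/\ border (window_eq k) (k + k) b, b < k + k &
      forall c, 0 < c < k + k -> border (window_eq k) (k + k) c -> 0 < b <= c].

(* The links stop at the last nonzero [b]: a shorter positive border of [s_k]
   would be a border of [b] longer than [m b = 0]. *)
Lemma shortest_border_spec k b r m s : frame k r -> r 11 = b -> b < k + k ->
  border (window_eq k) (k + k) b ->
  (b = 0 -> forall c, 0 < c < k + k -> ~ border (window_eq k) (k + k) c) ->
  failure_table k (k + k) m -> s <= k + k + 1 ->
  reaches kmp_prog q (Config 25 r m s) (fun t cf => exists b',
    [/\ t <= 4 * b + 3, pc cf = 30, frame k (reg cf), reg cf 11 = b' &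
        [/\ shortest_border k b', space cf <= k + k + 1 & Defs.mem cf = m]]).
Proof.
elim/ltn_ind: b r s => b IH r s fr e11 bk Hb Hb0 tab hs.
have [e1 e2 e3 e9 e10] := fr; have [m0 Hm] := tab.
do 2 exec; case: ifP => [mb0|/negbT].
  have b0 : 0 < b by case: (posnP b) mb0 => [->|//]; rewrite m0.
  have [lt_mb_b Hmb _] : longest_border (window_eq k) b (m b) by apply: Hm; lia.
  have Hmb' : border (window_eq k) (k + k) (m b).
    by apply: (border_trans (@window_eq_trans k) _ Hb Hmb); lia.
  do 2 exec; apply: reaches_weaken (IH _ lt_mb_b _ _ _ _ _ Hmb' _ tab _);
    rewrite /= ?updE /= ?addn0 //; try lia.
  by move=> t2 cf [b' [ht2 ? ? ? ?]]; exists b'; split=> //; lia.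
rewrite -eqn0Ngt => /eqP mb0; exec_step; apply: reaches_now; exists b.
split=> //; first lia.
split=> //=; last by lia.
split=> // c /andP[c0 ck] Hc; case: (posnP b) => [b0|b0].
  by case: (Hb0 b0 c); [lia | ].
rewrite /= leqNgt; apply/negP => cb.
have [_ _ Hmax] : longest_border (window_eq k) b (m b) by apply: Hm; lia.
apply: (Hmax c); first by rewrite mb0 c0.
by apply: (border_border (@window_eq_sym k) (@window_eq_trans k) _ Hb Hc); lia.
Qed.

Lemma round_search_spec k r m s : 0 < k ->
  r 1 = i -> r 2 = k -> r 9 = 1 -> r 10 = 0 -> m 0 = 0 -> s <= k + k + 1 ->
  reaches kmp_prog q (Config 2 r m s) (fun t cf => exists b,
    [/\ t <= 60 * k, pc cf = 30, frame k (reg cf), reg cf 11 = b &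
        [/\ shortest_border k b, space cf <= k + k + 1 & Defs.mem cf 0 = 0]]).
Proof.
move=> k0 e1 e2 e9 e10 m0 hs; do 4 exec.
set r1 := upd _ 4 1; set m1 := upd m 1 0.
have fr : frame k r1 by rewrite /r1; split; rewrite /= ?updE.
have tab : failure_table k 1 m1.
  split=> [|x x1]; rewrite /m1 updE //; rewrite (_ : x = 1) ?eqxx; last by lia.
  exact: longest_border1.
apply: reaches_seq.
  apply: (failure_table_spec (d := k + k - 1) _ _ fr _ _ (longest_border1 _) tab);
    rewrite /= ?updE //; lia.
move=> t1 [pc' r' m' s'] [ht1 /= -> fr' tab' hs'].
have [e1' e2' e3' e9' e10'] := fr'; have [m0' Hm'] := tab'.
exec; have [lt_Fb Fb Fmax] : longest_border (window_eq k) (k + k) (m' (k + k)) by apply: Hm'; lia.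
apply: reaches_seq.
  apply: (@shortest_border_spec k (m' (k + k))) => //; last by lia.
  by move=> Fb0 c hc; apply: Fmax; rewrite Fb0.
move=> t2 cf [b [ht2 pc2 fr2 e11 [Sb hs2 m2]]]; apply: reaches_now; exists b.
by split=> //; [lia | rewrite m2].
Qed.

Section LocalPeriod.
Variable mu : nat.
Hypothesis mu_lp : is_local_period n w i mu.
Hypothesis mu_left : 1 <= i - mu.
Hypothesis mu_right : i + mu - 1 <= n.

Lemma local_period_border k : mu <= k -> border (window_eq k) (k + k) mu.
Proof.
move=> muk t tmu; have [mu0 lp_mu _] := mu_lp.
rewrite /window_eq /window_pos ifT; last by lia.
rewrite ifF; last by apply/negbTE; rewrite -leqNgt; lia.
have Emu : w (i + t - mu) = w (i + t) by rewrite (lp_mu (i + t - mu)); [congr w | | ]; lia.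
rewrite (_ : i + _ - (k + k) = i + t - mu); last by lia.
by rewrite /letter_oracle Emu eqxx andbT; apply/andP; split; lia.
Qed.

Lemma border_lp_cond k b : 0 < b <= k -> b <= mu -> border (window_eq k) (k + k) b ->
  lp_cond n w i b.
Proof.
move=> /andP[b0 bk] bmu Hb j j_ge j_le.
have := Hb (j + b - i); rewrite /window_eq /window_pos ifT; last by lia.
rewrite ifF; last by apply/negbTE; rewrite -leqNgt; lia.
rewrite (_ : i + _ - (k + k) = j); last by lia.
rewrite (_ : i + (j + b - i) = j + b); last by lia.
by case/(_ _)/and3P=> [|_ _ /eqP]; first lia.
Qed.

Lemma shortest_border_eq_mu k b : shortest_border k b -> 0 < b <= k -> b = mu.
Proof.
move=> [Hb _ Hmin] /andP[b0 bk]; have [mu0 _ mu_min] := mu_lp.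
case: (ltngtP b mu) => [bmu|mub|//].
  by case: (mu_min b b0 bmu); apply: (border_lp_cond _ (ltnW bmu) Hb); rewrite b0.
have mu2k : 0 < mu < k + k by rewrite mu0; lia.
have /andP[_] := Hmin mu mu2k (local_period_border (ltnW (leq_trans mub bk))).
by rewrite leqNgt mub.
Qed.

Lemma shortest_border_lt_mu k b : shortest_border k b -> ~~ (0 < b <= k) -> k < mu.
Proof.
move=> [_ _ Hmin] bk; rewrite ltnNge; apply/negP => muk; have [mu0 _ _] := mu_lp.
have mu2k : 0 < mu < k + k by rewrite mu0; lia.
have /andP[b0 bmu] := Hmin mu mu2k (local_period_border muk).
by move: bk; rewrite b0 (leq_trans bmu muk).
Qed.

(* A round costs at most 65 k steps, paid by the drop of the potential
   [70 (4 mu - k)] when [k] doubles. *)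
Lemma kmp_rounds_spec d k r m s : 2 * mu <= k + d -> k < 2 * mu -> 0 < k ->
  r 1 = i -> r 2 = k -> r 9 = 1 -> r 10 = 0 -> m 0 = 0 -> s <= k + k + 1 ->
  reaches kmp_prog q (Config 2 r m s) (fun t cf =>
    [/\ halted kmp_prog q cf, reg cf 0 = mu, t <= 70 * (4 * mu - k) & space cf <= 4 * mu]).
Proof.
elim: d k r m s => [|d IH] k r m s hd hk k0 e1 e2 e9 e10 m0 hs; first lia.
apply: reaches_seq; first exact: (round_search_spec k0 e1 e2 e9 e10 m0 hs).
move=> t1 [pc' r' m' s'] [b [ht1 /= -> fr e11 [Sb hs' m0']]].
have [f1 f2 f3 f9 f10] := fr.
case: (boolP (0 < b <= k)) => bk.
  have bmu := shortest_border_eq_mu Sb bk; case/andP: bk => b0 bk.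
  exec; rewrite b0; exec; rewrite ltnNge bk; exec_step; apply: reaches_now.
  by split=> //=; [rewrite updE /= e11 f10 addn0 | lia | lia].
have kmu := shortest_border_lt_mu Sb bk.
have kb : 0 < b -> k < b by move=> b0; move: bk; rewrite b0 -ltnNge.
exec; case: ifP => b0; [exec; rewrite (kb b0) | exec]; do 2 exec;
  apply: reaches_weaken (IH (k + k) _ _ _ _ _ _ _ _ _ _ _ _); rewrite /= ?updE //; try lia;
  by move=> t2 cf [? ? ht2 ?]; split=> //; lia.
Qed.

End LocalPeriod.

End Window.

Theorem lemma6 :
  exists (P : seq instr) (C : nat),
    forall (A : eqType) (n : nat) (w : nat -> A) (i mu : nat),
      1 <= i <= n ->
      is_local_period n w i mu ->
      1 <= i - mu ->
      i + mu - 1 <= n ->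
      exists t : nat,
        let c := run P (letter_oracle n w) t (init n i) in
        [/\ halted P (letter_oracle n w) c,
            reg c 0 = mu,
            t <= C * mu &
            space c <= C * mu].
Proof.
exists kmp_prog, 300 => A n w i mu _ mu_lp mu_left mu_right.
have mu0 : 0 < mu by case: mu_lp.
change (reaches kmp_prog (letter_oracle n w) (init n i) (fun t c =>
  [/\ halted kmp_prog (letter_oracle n w) c, reg c 0 = mu, t <= 300 * mu & space c <= 300 * mu])).
rewrite /init; do 2 exec_step.
apply: reaches_weaken (kmp_rounds_spec mu_lp mu_left mu_right (d := 2 * mu) (k := 1) _ _ _ _ _ _ _ _ _);
  rewrite /= ?updE //; try lia.
by move=> t c [? ? ht hs]; split=> //; lia.
Qed.
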